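(* Let $\delta\geq0$. If a $2$-edge-coloured (red/blue) $K_n$ is $\delta$-close to being split, then it has a vertex incident to at most $(1/4+3\delta)n$ red edges or a vertex incident to at most $(1/4+3\delta)n$ blue edges.
   Context: A $2$-edge-coloured $K_n$ is split if its vertex set can be partitioned into a set spanning only red edges and a set spanning only blue edges. It is $\delta$-close to being split if it can be made into a split colouring by changing the colours of at most $\delta n^2$ edges. *)

From mathcomp Require Import all_boot all_order all_algebra.
Set Implicit Arguments. Unset Strict Implicit. Unset Printing Implicit Defensive.
Import Order.TTheory GRing.Theory Num.Theory.

(* A 2-edge-colouring of K_n on vertex set 'I_n: c x y = true means the edge
   xy is red, false means blue.  Only values on pairs x <> y are meaningful;
   we require symmetry. *)
Definition colouring (n : nat) := 'I_n -> 'I_n -> bool.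

Definition sym_colouring n (c : colouring n) : Prop :=
  forall x y : 'I_n, c x y = c y x.

Definition is_split n (c : colouring n) : Prop :=
  exists S : {set 'I_n},
    (forall x y, x != y -> x \in S -> y \in S -> c x y) /\
    (forall x y, x != y -> x \notin S -> y \notin S -> ~~ c x y).

Definition num_diff n (c c' : colouring n) : nat :=
  #|[set p : 'I_n * 'I_n | (p.1 < p.2)%N & c p.1 p.2 != c' p.1 p.2]|.

Definition close_to_split (R : realFieldType) n (delta : R) (c : colouring n)
  : Prop :=
  exists c' : colouring n, sym_colouring c' /\ is_split c' /\
    ((num_diff c c')%:R <= delta * (n%:R) ^+ 2)%R.

Definition red_deg n (c : colouring n) (v : 'I_n) : nat :=
  #|[set u | (u != v) && c v u]|.
Definition blue_deg n (c : colouring n) (v : 'I_n) : nat :=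
  #|[set u | (u != v) && ~~ c v u]|.

From mathcomp Require Import all_boot all_order all_algebra.
From mathcomp Require Import lra.
Import Order.TTheory GRing.Theory Num.Theory.

Set Implicit Arguments.
Unset Strict Implicit.
Unset Printing Implicit Defensive.

(* Let S be the red side of a split colouring c' close to c.  Call the edge uv
   wrong at v when its colour in c is not the colour of v's side (blue with
   v in S, red with v outside S); the number of wrong edges at v is then the
   blue degree of v if v is in S and its red degree otherwise.  An edge inside
   S or inside its complement is wrong only if c and c' disagree on it, and it
   is then counted at both ends; an edge between S and its complement is wrong
   at exactly one end.  Summing over v, the wrong degrees add up to at most
   2 delta n^2 + |S| (n - |S|) <= (2 delta + 1/4) n^2, so a vertex of minimal
   wrong degree has the required red or blue degree. *)

Lemma card_set_sum (T : finType) (P : pred T) : #|[set x | P x]| = \sum_x P x.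
Proof. by rewrite -sum1dep_card big_mkcond. Qed.

Lemma exists_le_average n (f : 'I_n -> nat) :
  0 < n -> exists v, n * f v <= \sum_u f u.
Proof.
case: n f => // n f _; case: (arg_minnP f (isT : predT ord0)) => v _ v_min.
exists v; rewrite -{1}(card_ord n.+1) -sum_nat_const.
by apply: leq_sum => u _; exact: v_min.
Qed.

Lemma handshake n (d : rel 'I_n) : symmetric d ->
  \sum_v #|[set u | (u != v) && d v u]|
    = 2 * #|[set p : 'I_n * 'I_n | (p.1 < p.2) && d p.1 p.2]|.
Proof.
move=> d_sym.
have split_neq v u :
    (u != v) && d v u = (v < u) && d v u + (u < v) && d u v :> nat.
  by rewrite (d_sym u v) -val_eqE neq_ltn orbC; case: ltngtP; case: (d v u).
under eq_bigr => v _ do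
  rewrite card_set_sum (eq_bigr _ (fun u _ => split_neq v u)) big_split.
rewrite big_split /= [X in _ + X]exchange_big /= addnn -mul2n.
by rewrite pair_bigA card_set_sum.
Qed.

Definition wrong_deg n (c : colouring n) (S : {set 'I_n}) (v : 'I_n) :=
  #|[set u | (u != v) && (c v u != (v \in S))]|.

Lemma wrong_deg_in n (c : colouring n) (S : {set 'I_n}) v :
  v \in S -> wrong_deg c S v = blue_deg c v.
Proof. by move=> vS; apply: eq_card => u; rewrite !inE vS; case: (c v u). Qed.

Lemma wrong_deg_notin n (c : colouring n) (S : {set 'I_n}) v :
  v \notin S -> wrong_deg c S v = red_deg c v.
Proof.
by move=> /negbTE vS; apply: eq_card => u; rewrite !inE vS; case: (c v u).
Qed.

Lemma sum_wrong_cross n (c : colouring n) (S : {set 'I_n}) : symmetric c ->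
  \sum_v #|[set u | ((v \in S) != (u \in S)) && (c v u != (v \in S))]|
    = #|S| * #|~: S|.
Proof.
move=> c_sym.
have split_cross v u :
    ((v \in S) != (u \in S)) && (c v u != (v \in S))
    = [&& v \in S, u \notin S & ~~ c v u]
      + [&& u \in S, v \notin S & c u v] :> nat.
  by rewrite (c_sym u v); case: (v \in S); case: (u \in S); case: (c v u).
under eq_bigr => v _ do
  rewrite card_set_sum (eq_bigr _ (fun u _ => split_cross v u)) big_split.
rewrite big_split /= [X in _ + X]exchange_big -big_split /=.
rewrite -[#|S|]sum1_card [X in _ = X * _]big_mkcond big_distrl.
apply: eq_bigr => v _ /=.
rewrite -[#|~: S|]sum1_card [X in _ = _ * X]big_mkcond big_distrr -big_split.
apply: eq_bigr => u _ /=.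
by rewrite !inE; case: (v \in S); case: (u \in S); case: (c v u).
Qed.

Section SplitNearby.

Variables (n : nat) (c c' : colouring n) (S : {set 'I_n}).
Hypotheses (c_sym : sym_colouring c) (c'_sym : sym_colouring c').
Hypothesis S_red : forall x y, x != y -> x \in S -> y \in S -> c' x y.
Hypothesis S_blue : forall x y, x != y -> x \notin S -> y \notin S -> ~~ c' x y.

Lemma wrong_deg_le_diff_cross v :
  wrong_deg c S v
    <= #|[set u | (u != v) && (c v u != c' v u)]|
       + #|[set u | ((v \in S) != (u \in S)) && (c v u != (v \in S))]|.
Proof.
rewrite /wrong_deg !card_set_sum -big_split; apply: leq_sum => u _.
case: (boolP (u != v)) => //= u_v; rewrite eq_sym in u_v.
case: (boolP (v \in S)) => vS; case: (boolP (u \in S)) => uS /=.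
- by rewrite (S_red u_v vS uS); case: (c v u).
- by case: (c v u); case: (c' v u).
- by case: (c v u); case: (c' v u).
- by rewrite (negbTE (S_blue u_v vS uS)); case: (c v u).
Qed.

Lemma sum_wrong_deg_le : 4 * \sum_v wrong_deg c S v <= 8 * num_diff c c' + n ^ 2.
Proof.
have diff_sym : symmetric (fun x y => c x y != c' x y).
  by move=> x y; rewrite c_sym c'_sym.
have := leq_sum (index_enum 'I_n) (fun v (_ : true) => wrong_deg_le_diff_cross v).
rewrite big_split /= (handshake diff_sym) (sum_wrong_cross S c_sym) => sum_le.
have [AGM _] := nat_AGM2 #|S| #|~: S|; rewrite cardsC card_ord in AGM.
apply: leq_trans (leq_add (leqnn _) AGM).
by rewrite -[8]/(4 * 2) -mulnA -mulnDr leq_mul2l sum_le orbT.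
Qed.

End SplitNearby.

Local Open Scope ring_scope.

Theorem proposition3p5 (R : realFieldType) (n : nat) (delta : R)
  (c : colouring n) :
  (0 < n)%N -> 0 <= delta -> sym_colouring c -> close_to_split delta c ->
  exists v : 'I_n,
    ((red_deg c v)%:R <= (1 / 4 + 3 * delta) * n%:R) \/
    ((blue_deg c v)%:R <= (1 / 4 + 3 * delta) * n%:R).
Proof.
move=> n_gt0 delta_ge0 c_sym [c' [c'_sym [[S [S_red S_blue]] close]]].
have [v v_avg] := exists_le_average (wrong_deg c S) n_gt0.
have total := sum_wrong_deg_le c_sym c'_sym S_red S_blue.
have v_small : (wrong_deg c S v)%:R <= (1 / 4 + 3 * delta) * n%:R :> R.
  have n_pos : 0 < n%:R :> R by rewrite ltr0n.
  have : (4 * (n * wrong_deg c S v))%:R <= (8 * num_diff c c' + n ^ 2)%:R :> R.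
    by rewrite ler_nat (leq_trans _ total) // leq_mul2l v_avg.
  rewrite !natrM natrD natrX; nra.
exists v; have [vS | vS] := boolP (v \in S).
- by right; rewrite -(wrong_deg_in c vS).
- by left; rewrite -(wrong_deg_notin c vS).
Qed.
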